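(* For every nonempty rooted tree $t$ with $|t|$ vertices, write $\Lambda(t)=\sum_{s=1}^{|t|}\omega_s(t)x^s$. Then $$\omega(t)=\sum_{s\ge1}\frac{(-1)^{s+1}}{s}\,\omega_s(t).$$
   Context: Let $k$ be a field of characteristic $0$. $\mathcal A=k[x]$ with the quasi-shuffle product $\diamond$ determined by $\mathbf 1\diamond u=u\diamond\mathbf 1=u$ and $x^k\diamond x^l=(x^{k-1}\diamond x^l)x+(x^k\diamond x^{l-1})x+(x^{k-1}\diamond x^{l-1})x$ ($k,l\ge1$). $\mathcal H_{CK}$ is the Connes–Kreimer Hopf algebra of rooted forests (free commutative algebra on nonempty non-planar rooted trees, unit the empty forest $\mathbf 1$, counit $\varepsilon$, coproduct by admissible cuts $\Delta_{CK}(u)=\sum v\otimes w$ over decompositions of the vertex set of $u$ into $V\sqcup W$ with no vertex of $V$ strictly below a vertex of $W$). $B_+$ grafts a forest onto a new root; $\Lambda:\mathcal H_{CK}\to\mathcal A$ is the unique unital algebra morphism with $\Lambda(B_+(t_1\cdots t_n))=(\Lambda(t_1)\diamond\cdots\diamond\Lambda(t_n))x$. $\delta$ is the character of $\mathcal H_{CK}$ with $\delta(\bullet)=1$ ($\bullet$ the one-vertex tree) and $\delta(t)=0$ for trees with at least two vertices, and $\omega=\log^*\delta=\sum_{n\ge1}\frac{(-1)^{n+1}}{n}(\delta-\varepsilon)^{*n}$ with $*$ the convolution of $\mathcal H_{CK}^*$. *)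

From HB Require Import structures.
From mathcomp Require Import all_boot all_order all_algebra.
Set Implicit Arguments. Unset Strict Implicit. Unset Printing Implicit Defensive.
Import Order.TTheory GRing.Theory Num.Theory.
Local Open Scope ring_scope.

(* Rooted trees, represented by planar representatives (children listed in
   some order); all notions below are invariant under reordering children,
   so they are well defined on non-planar trees. A forest is a seq tree
   (the empty forest is the unit 1 of H_CK). *)
Inductive tree := Node of seq tree.

Fixpoint nverts (t : tree) : nat :=
  let: Node ts := t in (sumn (map nverts ts)).+1.

Definition is_leaf (t : tree) : bool := if t is Node [::] then true else false.

(* Trees whose vertices carry a boolean label (a vertex subset V = true-labelled). *)
Inductive ltree := LNode of bool & seq ltree.

Definition prodl (A : Type) (xss : seq (seq A)) : seq (seq A) :=
  foldr (fun xs acc => [seq x :: a | x <- xs, a <- acc]) [:: [::]] xss.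

Fixpoint labelings (t : tree) : seq ltree :=
  let: Node ts := t in
  [seq LNode c ls | c <- [:: true; false], ls <- prodl (map labelings ts)].

Definition flabelings (u : seq tree) : seq (seq ltree) := prodl (map labelings u).

Fixpoint lall (t : ltree) : bool := let: LNode c ts := t in c && all lall ts.

(* Admissibility of V ⊔ W (V = true vertices): no vertex of V strictly below
   (i.e. a proper ancestor of, root drawn at the bottom) a vertex of W;
   equivalently every descendant of a V-vertex is in V. *)
Fixpoint adm (t : ltree) : bool :=
  let: LNode c ts := t in (c ==> all lall ts) && all adm ts.

(* Induced subforest on the vertices labelled b: returns the component
   containing the root (if the root is labelled b) and the other components. *)
Fixpoint cut (b : bool) (t : ltree) : option tree * seq tree :=
  let: LNode c ts := t in
  let rs := map (cut b) ts in
  if c == b then (Some (Node (pmap fst rs)), flatten (map snd rs))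
  else (None, flatten (map (fun r => oapp (fun x => [:: x]) [::] r.1 ++ r.2) rs)).

Definition restr (b : bool) (m : seq ltree) : seq tree :=
  flatten (map (fun t => let r := cut b t in oapp (fun x => [:: x]) [::] r.1 ++ r.2) m).

Section Coeffs.
Variable F : fieldType.

(* Elements of H_CK^* : linear forms, given by their values on basis forests. *)
Definition dual := seq tree -> F.

(* convolution: (f * g)(u) = sum over admissible cuts V ⊔ W of f(u|V) g(u|W) *)
Definition conv (f g : dual) : dual := fun u =>
  \sum_(m <- flabelings u | all adm m) f (restr true m) * g (restr false m).

Definition eps' : dual := fun u => if u is [::] then 1 else 0.

Definition delta : dual := fun u => (all is_leaf u)%:R.

Definition dme : dual := fun u => delta u - eps' u.

Fixpoint convpow (f : dual) (n : nat) : dual :=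
  match n with 0 => eps' | 1 => f | n'.+1 => conv f (convpow f n') end.

(* partial sums of log^* delta = sum_{n>=1} (-1)^(n+1)/n (delta - eps)^{*n} *)
Definition omegaN (N : nat) : dual := fun u =>
  \sum_(1 <= n < N.+1) ((-1) ^+ n.+1 / n%:R) * convpow dme n u.

Fixpoint qsh (k : nat) : nat -> {poly F} :=
  match k with
  | 0 => fun l => 'X^l
  | k'.+1 => fix qk (l : nat) : {poly F} :=
      match l with
      | 0 => 'X^(k'.+1)
      | l'.+1 => (qsh k' l + qk l' + qsh k' l') * 'X
      end
  end.

Definition qs (p q : {poly F}) : {poly F} :=
  \sum_(i < size p) \sum_(j < size q) (p`_i * q`_j) *: qsh i j.

Fixpoint Lam (t : tree) : {poly F} :=
  let: Node ts := t in foldr qs 1 (map Lam ts) * 'X.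

End Coeffs.

From HB Require Import structures.
From mathcomp Require Import all_boot all_order all_algebra.
From Stdlib Require List.
Import GRing.Theory.
Local Open Scope ring_scope.
Set Implicit Arguments. Unset Strict Implicit.

(* Write D_k = delta^{*k} and E_n = (delta - eps)^{*n}, so that
   omegaN N (t) = sum_{1<=n<=N} (-1)^{n+1}/n E_n(t).  It suffices to show
   E_n(t) = omega_n(t), the n-th coefficient of Lambda(t), and that this
   coefficient vanishes for n > |t|.
   1. Labelings: summing over the labelings in which every vertex carries the
      same label b selects the single constant labeling; hence eps is the unit
      of convolution and convolution of characters is a character.
   2. Since delta kills every tree with an edge, the cut formula gives
      D_k(B+(ts)) = sum_{j<k} D_j(ts).
   3. The linear form beval_k : x^i |-> C(k,i) turns the quasi-shuffle into a
      product and right multiplication by x into p |-> sum_{j<k} beval_j p; so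
      beval_k o Lambda satisfies the same recursion as D_k, and the two agree.
   4. delta = (delta - eps) + eps gives D_k = sum_n C(k,n) E_n; inverting this
      unitriangular binomial system yields E_n(t) = omega_n(t).
   5. Lambda(t) has degree at most |t|, which truncates the sum.
   No hypothesis on the characteristic is needed: all sums involved are finite. *)

Definition tree_ind' (P : tree -> Prop)
  (H : forall ts, List.Forall P ts -> P (Node ts)) : forall t, P t :=
  fix rec t := match t with
  | Node ts => H ts ((fix aux ts : List.Forall P ts :=
       match ts with
       | [::] => List.Forall_nil P
       | t :: ts' => List.Forall_cons t (rec t) (aux ts')
       end) ts)
  end.

Definition ltree_ind' (P : ltree -> Prop)
  (H : forall c ts, List.Forall P ts -> P (LNode c ts)) : forall t, P t :=
  fix rec t := match t with
  | LNode c ts => H c ts ((fix aux ts : List.Forall P ts :=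
       match ts with
       | [::] => List.Forall_nil P
       | t :: ts' => List.Forall_cons t (rec t) (aux ts')
       end) ts)
  end.

Section ConstantLabelings.

Fixpoint labelled_all (b : bool) (t : ltree) : bool :=
  let: LNode c ts := t in (c == b) && all (labelled_all b) ts.

Fixpoint label_all (b : bool) (t : tree) : ltree :=
  let: Node ts := t in LNode b (map (label_all b) ts).

Lemma lall_labelled_all x : lall x = labelled_all true x.
Proof.
elim/ltree_ind': x => c ts IH /=; congr (_ && _); first by case: c.
by elim: IH => //= x l -> _ ->.
Qed.

Lemma labelled_all_adm b x : labelled_all b x -> adm x.
Proof.
elim/ltree_ind': x => c ts IH /= /andP[/eqP-> H]; apply/andP; split.
  case: b H {IH} => H //=.
  by elim: ts H => //= x l IH /andP[Hx Hl]; rewrite lall_labelled_all Hx IH.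
by elim: IH H => //= x l Hx _ IH /andP[H1 H2]; rewrite Hx // IH.
Qed.

Lemma all_labelled_all_adm b m : all (labelled_all b) m -> all adm m.
Proof. by elim: m => //= x m IH /andP[/labelled_all_adm -> /IH]. Qed.

Lemma cut_label_all b t :
  cut b (label_all b t) = (Some t, [::]) /\ cut (~~ b) (label_all b t) = (None, [::]).
Proof.
elim/tree_ind': t => ts IH /=; rewrite eqxx.
have -> : (b == ~~ b) = false by clear; case: b.
by elim: IH => //= t l [-> ->] _ [[->] ->].
Qed.

Lemma restr_cons b x m : restr b (x :: m) = restr b [:: x] ++ restr b m.
Proof. by rewrite /restr /= cats0. Qed.

Lemma restr_label_all b u :
  restr b (map (label_all b) u) = u /\ restr (~~ b) (map (label_all b) u) = [::].
Proof.
elim: u => [|t u [IH1 IH2]] //=.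
rewrite restr_cons [restr (~~ b) (_ :: _)]restr_cons IH1 IH2 /restr /=.
by case: (cut_label_all b t) => -> ->.
Qed.

Lemma cat_nil (T : Type) (a b : seq T) : a ++ b = [::] -> a = [::] /\ b = [::].
Proof. by case: a. Qed.

Lemma cut_none b x : cut b x = (None, [::]) <-> labelled_all (~~ b) x.
Proof.
elim/ltree_ind': x => c ts IH /=.
case: (boolP (c == b)) => [/eqP->|hc].
  by split => //; case: b {IH}.
have -> : (c == ~~ b) = true by move: hc; clear; case: b; case: c.
split.
  case; elim: IH => //= x l [H1 _] _ IH.
  case: (cut b x) H1 => o s H1 /= /cat_nil [/cat_nil [ho ho'] hl].
  rewrite IH // andbT; apply/H1; rewrite ho'; by case: o ho H1.
move=> H; congr pair.
elim: IH H => //= x l [_ H2] _ IH /andP[hx hl].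
by rewrite H2 //= IH.
Qed.

Lemma restr_nil b m : restr b m = [::] <-> all (labelled_all (~~ b)) m.
Proof.
elim: m => [|x m IH] //=; rewrite restr_cons; split.
  move/cat_nil => [h1 /IH ->]; rewrite andbT; apply/cut_none; move: h1.
  rewrite /restr /= cats0; case: (cut b x) => [o s] /= /cat_nil [h ->].
  by case: o h.
by case/andP => /cut_none hx /IH ->; rewrite cats0 /restr /= hx.
Qed.

Lemma adm_cut_false x : adm x -> (cut false x).2 = [::].
Proof.
elim/ltree_ind': x => c ts IH /= /andP[H1 H2].
case: c H1 => /= H1.
  have : labelled_all (~~ false) (LNode true ts).
    by rewrite /= -(eq_all lall_labelled_all).
  by move/cut_none => /= [].
by elim: IH H2 => //= x l Hx _ IH /andP[a b]; rewrite Hx // IH.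
Qed.

Lemma restr_false_adm ls : all adm ls ->
  restr false ls = pmap fst (map (cut false) ls) /\
  flatten (map snd (map (cut false) ls)) = [::].
Proof.
elim: ls => [|x ls IH] //= /andP[hx hl].
case: (IH hl) => <- ->; rewrite restr_cons /restr /= cats0.
by move: (adm_cut_false hx); case: (cut false x) => o s /= ->; case: o.
Qed.

Lemma flabelings_cons t u :
  flabelings (t :: u) = [seq x :: a | x <- labelings t, a <- flabelings u].
Proof. by []. Qed.

Variable F : fieldType.

Lemma sum_labelled_all_forest b u (G : seq ltree -> F) :
  List.Forall (fun t => forall (G : ltree -> F),
     \sum_(x <- labelings t | labelled_all b x) G x = G (label_all b t)) u ->
  \sum_(m <- flabelings u | all (labelled_all b) m) G m = G (map (label_all b) u).
Proof.
elim: u G => [|t u IH] G; first by rewrite /flabelings /= big_cons big_nil addr0.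
move/List.Forall_cons_iff=> [Ht Hu].
rewrite flabelings_cons big_mkcond big_allpairs_dep /=.
transitivity (\sum_(x <- labelings t | labelled_all b x)
                G (x :: map (label_all b) u)); last by rewrite Ht.
rewrite [RHS]big_mkcond /=; apply: eq_bigr => x _; case: ifP => hx.
  by rewrite -(IH (fun a => G (x :: a))) // [RHS]big_mkcond; apply: eq_bigr.
by rewrite big1.
Qed.

Lemma sum_labelled_all b t (G : ltree -> F) :
  \sum_(x <- labelings t | labelled_all b x) G x = G (label_all b t).
Proof.
elim/tree_ind': t G => ts IH G /=.
rewrite !big_cat !big_map /=.
have H := fun G => sum_labelled_all_forest G IH.
case: b IH H => IH H /=.
  by rewrite -(H (fun ls => G (LNode true ls))) big_pred0_eq big_nil !addr0.
by rewrite -(H (fun ls => G (LNode false ls))) big_pred0_eq big_nil addr0 add0r.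
Qed.

Lemma sum_flabelled_all b u (G : seq ltree -> F) :
  \sum_(m <- flabelings u | all (labelled_all b) m) G m = G (map (label_all b) u).
Proof.
apply: sum_labelled_all_forest; elim: u => //= t u IH.
by constructor => // G'; exact: sum_labelled_all.
Qed.

End ConstantLabelings.

Section Convolution.

Variable F : fieldType.
Implicit Types f g : dual F.

Definition character (h : dual F) := h [::] = 1 /\ forall a b, h (a ++ b) = h a * h b.

Lemma conv_nil f g : conv f g [::] = f [::] * g [::].
Proof. by rewrite /conv /flabelings /= big_cons big_nil addr0. Qed.

Lemma conv_extr f g g' u : (forall v, g v = g' v) -> conv f g u = conv f g' u.
Proof. by move=> H; apply: eq_bigr => m _; rewrite H. Qed.

Lemma conv_extl f f' g u : (forall v, f v = f' v) -> conv f g u = conv f' g u.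
Proof. by move=> H; apply: eq_bigr => m _; rewrite H. Qed.

Lemma conv_cons f g t u : conv f g (t :: u) =
  \sum_(x <- labelings t) \sum_(a <- flabelings u)
     (if adm x && all adm a then
       f (restr true [:: x] ++ restr true a) * g (restr false [:: x] ++ restr false a)
     else 0).
Proof.
rewrite /conv flabelings_cons big_mkcond big_allpairs_dep /=.
apply: eq_bigr => x _; apply: eq_bigr => a _.
by rewrite restr_cons [restr false _]restr_cons.
Qed.

Lemma conv1 f g t : conv f g [:: t] =
  \sum_(x <- labelings t | adm x) f (restr true [:: x]) * g (restr false [:: x]).
Proof.
rewrite conv_cons [RHS]big_mkcond; apply: eq_bigr => x _.
by rewrite /flabelings /= big_cons big_nil addr0 andbT !cats0.
Qed.

(* The convolution of two characters is a character (Delta_CK is an algebra map). *)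
Lemma conv_character f g : character f -> character g -> character (conv f g).
Proof.
move=> [f0 fM] [g0 gM].
have conv_consM t u : conv f g (t :: u) = conv f g [:: t] * conv f g u.
  rewrite conv_cons conv1 [X in _ = X * _]big_mkcond mulr_suml.
  apply: eq_bigr => x _; rewrite /conv mulr_sumr [RHS]big_mkcond.
  apply: eq_bigr => a _; case: (adm x) => /=; case: (all adm a) => //.
    by rewrite fM gM mulrACA.
  by rewrite mul0r.
split; first by rewrite conv_nil f0 g0 mulr1.
elim=> [|t a IH] b; first by rewrite conv_nil f0 g0 !mul1r.
by rewrite cat_cons conv_consM IH mulrA -conv_consM.
Qed.

Lemma eps_restr b m : eps' F (restr b m) = (all (labelled_all (~~ b)) m)%:R.
Proof.
have := restr_nil b m; case: (restr b m) => [|x l] /= [h1 h2]; first by rewrite h1.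
by case: (all _ m) h2 => // /(_ isT).
Qed.

Lemma conv_eps_l g u : conv (eps' F) g u = g u.
Proof.
rewrite /conv.
transitivity (\sum_(m <- flabelings u | all (labelled_all false) m) g (restr false m)).
  rewrite big_mkcond [RHS]big_mkcond; apply: eq_bigr => m _.
  rewrite eps_restr; case h: (all (labelled_all false) m).
    by rewrite (all_labelled_all_adm h) mul1r.
  by rewrite mul0r; case: ifP.
by rewrite sum_flabelled_all (restr_label_all false u).1.
Qed.

Lemma conv_eps_r f u : conv f (eps' F) u = f u.
Proof.
rewrite /conv.
transitivity (\sum_(m <- flabelings u | all (labelled_all true) m) f (restr true m)).
  rewrite big_mkcond [RHS]big_mkcond; apply: eq_bigr => m _.
  rewrite eps_restr; case h: (all (labelled_all true) m).
    by rewrite (all_labelled_all_adm h) mulr1.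
  by rewrite mulr0; case: ifP.
by rewrite sum_flabelled_all (restr_label_all true u).1.
Qed.

Lemma convpowS f k u : convpow f k.+1 u = conv f (convpow f k) u.
Proof. by case: k => [|k] //=; rewrite conv_eps_r. Qed.

Lemma conv_addl f1 f2 g u :
  conv (fun v => f1 v + f2 v) g u = conv f1 g u + conv f2 g u.
Proof. by rewrite /conv -big_split /=; apply: eq_bigr => m _; rewrite mulrDl. Qed.

Lemma conv_sumr f n (c : nat -> F) (G : nat -> dual F) u :
  conv f (fun v => \sum_(i < n) c i * G i v) u = \sum_(i < n) c i * conv f (G i) u.
Proof.
rewrite /conv; under eq_bigr do rewrite mulr_sumr.
rewrite exchange_big /=; apply: eq_bigr => i _.
by rewrite mulr_sumr; apply: eq_bigr => m _; rewrite mulrCA.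
Qed.

Lemma conv_node f g ts : conv f g [:: Node ts] = f [:: Node ts] * g [::] +
  \sum_(ls <- flabelings ts | all adm ls)
     f (restr true ls) * g [:: Node (restr false ls)].
Proof.
rewrite conv1 /= !big_cat !big_map /= [X in _ + (_ + X)]big_nil addr0.
congr (_ + _).
  have -> : \sum_(j <- prodl [seq labelings i | i <- ts] | all lall j && all adm j)
      f (restr true [:: LNode true j]) * g (restr false [:: LNode true j]) =
    \sum_(j <- flabelings ts | all (labelled_all true) j)
      f (restr true [:: LNode true j]) * g (restr false [:: LNode true j]).
    apply: eq_bigl => j; rewrite (eq_all lall_labelled_all).
    by case h: (all _ j) => //=; rewrite (all_labelled_all_adm h).
  rewrite sum_flabelled_all; have [h1 h2] := restr_label_all true [:: Node ts].
  by rewrite /= in h1 h2; rewrite h1 h2.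
apply: eq_bigr => ls hls; have [h1 h2] := restr_false_adm hls.
congr (f _ * g _); first by rewrite {1}/restr /= !cats0 /restr -map_comp.
by rewrite h1 {1}/restr /= h2.
Qed.

End Convolution.

Section PowersOfDelta.

Variable F : fieldType.

Notation D := (convpow (delta F)).
Notation E := (convpow (dme F)).

Lemma delta_character : character (delta F).
Proof.
split => // a b; rewrite /delta all_cat.
by case: (all is_leaf a); case: (all is_leaf b); rewrite /= ?mul1r ?mul0r.
Qed.

Lemma eps_character : character (eps' F).
Proof. by split => // [[|x a]] [|y b] /=; rewrite ?mul1r ?mul0r ?mulr0. Qed.

Lemma D_character k : character (D k).
Proof.
elim: k => [|[|k] IH]; [exact: eps_character | exact: delta_character |].
exact: conv_character delta_character IH.
Qed.

(* Recursion of delta^{*k} along B+; the sum over cuts of the children with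
   delta on the V' side is exactly a convolution delta * D_j of the children. *)
Lemma D_node k ts : D k [:: Node ts] = \sum_(j < k) D j ts.
Proof.
elim: k ts => [|k IH] ts; first by rewrite big_ord0.
have [D0 _] := D_character k.
rewrite convpowS conv_node D0 mulr1 big_ord_recl; congr (_ + _); first by case: ts.
under eq_bigr do rewrite IH mulr_sumr.
by rewrite exchange_big; apply: eq_bigr => j _; rewrite lift0 convpowS.
Qed.

(* Binomial expansion of delta^{*k} = ((delta - eps) + eps)^{*k}. *)
Lemma D_binomial k u : D k u = \sum_(n < k.+1) 'C(k, n)%:R * E n u.
Proof.
elim: k u => [|k IH] u; first by rewrite big_ord1 /= mul1r.
rewrite convpowS (conv_extr (delta F) u IH).
rewrite (conv_extl (f' := fun v => dme F v + eps' F v)); last first.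
  by move=> v; rewrite /dme subrK.
rewrite conv_addl conv_eps_l
  (@conv_sumr _ (dme F) k.+1 (fun n => 'C(k, n)%:R) (fun n => E n) u).
under [X in X + _ = _]eq_bigr do rewrite -convpowS.
rewrite [RHS]big_ord_recl bin0 mul1r.
under [X in _ = _ + X]eq_bigr do rewrite lift0 binS natrD mulrDl.
rewrite big_split /= [X in _ + X = _]big_ord_recl bin0 mul1r.
rewrite [X in _ = _ + (X + _)]big_ord_recr /= bin_small // mul0r addr0.
by rewrite addrC -!addrA; congr (_ + _); rewrite addrC.
Qed.

End PowersOfDelta.

Lemma big_nat_trunc (R : zmodType) lo m n (G : nat -> R) : (m <= n)%N ->
  (forall i, (m <= i)%N -> G i = 0) ->
  \sum_(lo <= i < n) G i = \sum_(lo <= i < m) G i.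
Proof.
move=> hmn H; case: (leqP lo m) => hlo.
  rewrite (@big_cat_nat _ _ _ m lo n) // /= [X in _ + X]big_nat_cond.
  by rewrite [X in _ + X]big1 ?addr0 // => i /andP[/andP[h _] _]; exact: H.
rewrite [RHS]big_geq ?(ltnW hlo) // big_nat_cond big1 // => i /andP[/andP[h _] _].
by apply: H; exact: leq_trans (ltnW hlo) h.
Qed.

Section BinomialEvaluation.

Variable F : fieldType.

Definition beval k (p : {poly F}) := \sum_(i < k.+1) p`_i * 'C(k, i)%:R.

Lemma bevalD k : {morph beval k : x y / x + y >-> x + y}.
Proof.
by move=> x y; rewrite /beval -big_split; apply: eq_bigr => i _; rewrite coefD mulrDl.
Qed.

Lemma beval0 k : beval k 0 = 0.
Proof. by rewrite /beval big1 // => i _; rewrite coef0 mul0r. Qed.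

Lemma bevalZ k c p : beval k (c *: p) = c * beval k p.
Proof. by rewrite /beval mulr_sumr; apply: eq_bigr => i _; rewrite coefZ mulrA. Qed.

Lemma beval_sum k (I : Type) (r : seq I) (G : I -> {poly F}) :
  beval k (\sum_(i <- r) G i) = \sum_(i <- r) beval k (G i).
Proof. exact: (big_morph (beval k) (bevalD k) (beval0 k)). Qed.

Lemma beval1 k : beval k 1 = 1.
Proof.
rewrite /beval big_ord_recl coef1 /= bin0 mulr1 big1 ?addr0 // => i _.
by rewrite coef1 mul0r.
Qed.

(* Pascal's rule turns multiplication by x into a discrete integral. *)
Lemma beval_mulX k p : beval k (p * 'X) = \sum_(j < k) beval j p.
Proof.
elim: k => [|k IH]; first by rewrite /beval big_ord1 coefMX /= mul0r big_ord0.
rewrite big_ord_recr -IH /beval big_ord_recl coefMX /= mul0r add0r.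
rewrite [X in _ = X + _]big_ord_recl coefMX /= mul0r add0r.
under eq_bigr do rewrite coefMX /= binS natrD mulrDr.
rewrite big_split /=; congr (_ + _).
rewrite big_ord_recr /= bin_small // mulr0 addr0.
by apply: eq_bigr => i _; rewrite coefMX.
Qed.

Lemma beval_size k p : beval k p = \sum_(i < size p) p`_i * 'C(k, i)%:R.
Proof.
rewrite /beval -!(big_mkord xpredT (fun i => p`_i * 'C(k, i)%:R)).
rewrite -(@big_nat_trunc _ 0 _ (k.+1 + size p)) ?leq_addr //; last first.
  by move=> i hi; rewrite bin_small // mulr0.
rewrite (@big_nat_trunc _ 0 (size p)) ?leq_addl // => i hi.
by rewrite nth_default // mul0r.
Qed.

Lemma beval_Xn k l : beval k 'X^l = 'C(k, l)%:R.
Proof.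
elim: l k => [|l IH] k; first by rewrite expr0 beval1 bin0.
rewrite exprSr beval_mulX; elim: k => [|k IHk]; first by rewrite big_ord0 bin0n.
by rewrite big_ord_recr IHk IH binS natrD.
Qed.

Lemma qshSS i j : qsh F i.+1 j.+1 = (qsh F i j.+1 + qsh F i.+1 j + qsh F i j) * 'X.
Proof. by []. Qed.

(* Vandermonde-type identity: beval_k is multiplicative on quasi-shuffles of
   monomials, since the quasi-shuffle counts overlapping pairs of subsets. *)
Lemma beval_qsh k i j : beval k (qsh F i j) = 'C(k, i)%:R * 'C(k, j)%:R.
Proof.
have bevalXS k' p : beval k'.+1 (p * 'X) = beval k' (p * 'X) + beval k' p.
  by rewrite !beval_mulX big_ord_recr.
elim: k i j => [|k IH] [|i] [|j];
  try by rewrite [qsh F _ _]/= beval_Xn ?bin0 ?mul1r ?mulr1.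
  by rewrite qshSS beval_mulX big_ord0 bin0n mul0r.
rewrite qshSS bevalXS -qshSS !bevalD !IH !binS !natrD mulrDl !mulrDr.
by rewrite -!addrA; congr (_ + _); exact: addrCA.
Qed.

Lemma beval_qs k p q : beval k (qs p q) = beval k p * beval k q.
Proof.
rewrite /qs beval_sum (beval_size k p) (beval_size k q) mulr_suml.
apply: eq_bigr => i _; rewrite beval_sum mulr_sumr.
by apply: eq_bigr => j _; rewrite bevalZ beval_qsh mulrACA.
Qed.

Notation D := (convpow (delta F)).
Notation E := (convpow (dme F)).

(* beval_k o Lambda and D_k obey the same recursion along B+, hence agree. *)
Lemma D_Lam t k : D k [:: t] = beval k (Lam F t).
Proof.
elim/tree_ind': t k => ts IH k.
rewrite D_node /= beval_mulX; apply: eq_bigr => j _.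
elim: ts IH (nat_of_ord j) => [|t ts IHts] /= HF n.
  by rewrite beval1; case: (D_character F n).
case/List.Forall_cons_iff: HF => Ht Hts; have [_ DM] := D_character F n.
by rewrite beval_qs -Ht -IHts // -DM.
Qed.

Lemma binomial_inversion (a b : nat -> F) :
  (forall k, \sum_(n < k.+1) 'C(k, n)%:R * a n = \sum_(n < k.+1) 'C(k, n)%:R * b n) ->
  forall n, a n = b n.
Proof.
move=> H; suff S k n : (n < k)%N -> a n = b n by move=> n; exact: (S n.+1).
elim: k n => [|k IH] n //; rewrite ltnS leq_eqVlt => /orP[/eqP -> | /IH //].
have := H k; rewrite !big_ord_recr /= binn !mul1r.
have -> : \sum_(i < k) 'C(k, i)%:R * a i = \sum_(i < k) 'C(k, i)%:R * b i.
  by apply: eq_bigr => i _; rewrite IH.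
by move/addrI.
Qed.

Lemma E_Lam t n : E n [:: t] = (Lam F t)`_n.
Proof.
apply: (binomial_inversion (a := fun n => E n [:: t]) (b := fun n => (Lam F t)`_n)).
move=> k; rewrite -D_binomial D_Lam /beval.
by apply: eq_bigr => i _; exact: mulrC.
Qed.

End BinomialEvaluation.

Section Degree.

Variable F : fieldType.

Lemma qsh_coef i j m : (i + j < m)%N -> (qsh F i j)`_m = 0.
Proof.
elim: i j m => [|i IHi] j m.
  by move=> h; rewrite /= coefXn; case: eqP h => // ->; rewrite add0n ltnn.
elim: j m => [|j IHj] m h.
  by rewrite /= coefXn; case: eqP h => // ->; rewrite addn0 ltnn.
rewrite qshSS coefMX; case: m h => [|m] //= h.
have h1 : (i + j.+1 < m)%N by rewrite -ltnS -addSn.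
rewrite !coefD IHi // IHj ?addSnnS // IHi ?addr0 //.
by apply: leq_trans h1; rewrite ltnS addnS.
Qed.

Lemma qs_coef (p q : {poly F}) dp dq m : (forall i, (dp < i)%N -> p`_i = 0) ->
  (forall j, (dq < j)%N -> q`_j = 0) -> (dp + dq < m)%N -> (qs p q)`_m = 0.
Proof.
move=> hp hq hm; rewrite /qs coef_sum big1 // => i _.
rewrite coef_sum big1 // => j _; rewrite coefZ.
case: (leqP i dp) => hi; last by rewrite hp // mul0r mul0r.
case: (leqP j dq) => hj; last by rewrite (hq j) // mulr0 mul0r.
by rewrite qsh_coef ?mulr0 //; apply: leq_ltn_trans hm; exact: leq_add.
Qed.

Lemma Lam_coef t m : (nverts t < m)%N -> (Lam F t)`_m = 0.
Proof.
elim/tree_ind': t m => ts IH m /= hm.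
rewrite coefMX; case: m hm => [|m] //= hm.
elim: ts IH m hm => [|t ts IHts] HF m /= hm; first by rewrite coef1; case: m hm.
case/List.Forall_cons_iff: HF => Ht Hts.
by apply: (qs_coef (dp := nverts t) (dq := sumn (map nverts ts))) => // j hj; exact: IHts.
Qed.

Lemma size_Lam t : (size (Lam F t) <= (nverts t).+1)%N.
Proof. by apply/leq_sizeP => j hj; apply: Lam_coef. Qed.

End Degree.

Unset Implicit Arguments.
Set Strict Implicit.

Theorem mainTheorem17 (F : fieldType) (charF : [pchar F] =i pred0)
  (t : tree) (N : nat) :
  (nverts t <= N)%N ->
  omegaN F N [:: t] =
  \sum_(1 <= s < size (Lam F t)) ((-1) ^+ s.+1 / s%:R) * (Lam F t)`_s.
Proof.
move=> hN; rewrite /omegaN.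
under eq_bigr do rewrite E_Lam.
apply: big_nat_trunc; first exact: leq_trans (size_Lam F t) _.
by move=> i hi; rewrite nth_default // mulr0.
Qed.
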